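(* Let $n\ge1$, let $K$ be the uniform Kasteleyn matrix of the Aztec diamond of size $n$, $G_n(\mathtt{w},\mathtt{b})=\sum_{x\in\mathtt{W},y\in\mathtt{B}}K^{-1}(x,y)w_1^{x_1}w_2^{x_2}b_1^{y_1}b_2^{y_2}$, and for $k,l\in\{0,1\}$ $$H^{k,l}_n(\mathtt{w},\mathtt{b})=\sum_{\substack{1\le x_1\le 2n-1,\ x_1\text{ odd}\\1\le y_2\le 2n-1,\ y_2\text{ odd}}}K^{-1}((x_1,2nk),(2nl,y_2))\,w_1^{x_1}w_2^{2nk}b_1^{2nl}b_2^{y_2}.$$ Then, writing $H^{k,l}_n=H^{k,l}_n(\mathtt{w},\mathtt{b})$ and $C(r_1,r_2)=1+r_1^2r_2^2+\mathrm{i}(r_1^2+r_2^2)$, $$\begin{aligned}G_n(\mathtt{w},\mathtt{b})=&\ \frac{w_1w_2^2b_2f_{n+1}(w_1^2b_1^2)f_n(w_2^2b_2^2)}{C(w_1,w_2)}\\&+(1+\mathrm{i}w_1^2)\frac{(1+\mathrm{i}b_2^2)H^{0,0}_n+b_1^2\big(b_2w_1f_n(b_1^2w_1^2)+(\mathrm{i}+b_2^2)H^{0,1}_n\big)}{C(w_1,w_2)C(b_1,b_2)}\\&+(\mathrm{i}+w_1^2)w_2^2\frac{b_1^2b_2^{2n+1}w_1w_2^{2n}f_n(b_1^2w_1^2)+(1+\mathrm{i}b_2^2)H^{1,0}_n+b_1^2(\mathrm{i}+b_2^2)H^{1,1}_n}{C(w_1,w_2)C(b_1,b_2)}.\end{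aligned}$$
   Context: $\mathrm{i}=\sqrt{-1}$. $\mathtt{W}=\{(x_1,x_2): x_1\text{ odd},\ x_2\text{ even},\ 1\le x_1\le 2n-1,\ 0\le x_2\le 2n\}$, $\mathtt{B}=\{(x_1,x_2): x_1\text{ even},\ x_2\text{ odd},\ 0\le x_1\le 2n,\ 1\le x_2\le 2n-1\}$, $e_1=(1,1)$, $e_2=(-1,1)$. The uniform Kasteleyn matrix has rows indexed by $\mathtt{B}$, columns by $\mathtt{W}$, and $K(x,y)=1$ if $x-y=\pm e_1$, $K(x,y)=\mathrm{i}$ if $x-y=\pm e_2$, $0$ otherwise. $f_n(t)=(1-t^n)/(1-t)$. *)

From HB Require Import structures.
From mathcomp Require Import all_boot all_order all_algebra.
Set Implicit Arguments. Unset Strict Implicit. Unset Printing Implicit Defensive.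
Import Order.TTheory GRing.Theory Num.Theory.
Local Open Scope ring_scope.

(* Common index type for both colour classes: pairs (a, c), a < n, c <= n. *)
Definition Idx (n : nat) : finType := ('I_n * 'I_n.+1)%type.

(* White vertex (a,c) |-> (2a+1, 2c) : x1 odd in [1,2n-1], x2 even in [0,2n]. *)
Definition wpt (n : nat) (p : Idx n) : nat * nat :=
  ((2 * p.1 + 1)%N, (2 * p.2)%N).

(* Black vertex (a,c) |-> (2c, 2a+1) : x1 even in [0,2n], x2 odd in [1,2n-1]. *)
Definition bpt (n : nat) (p : Idx n) : nat * nat :=
  ((2 * p.2)%N, (2 * p.1 + 1)%N).

(* Uniform Kasteleyn weight K(x,y) for x black, y white:
   1 if x - y = +-e1 = +-(1,1), i if x - y = +-e2 = +-(-1,1), 0 otherwise. *)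
Definition kast (F : numClosedFieldType) (x y : nat * nat) : F :=
  let d1 : int := (x.1%:Z - y.1%:Z)%R in
  let d2 : int := (x.2%:Z - y.2%:Z)%R in
  if ((d1 == 1) && (d2 == 1)) || ((d1 == -1) && (d2 == -1)) then 1
  else if ((d1 == -1) && (d2 == 1)) || ((d1 == 1) && (d2 == -1)) then 'i
  else 0.

Definition KastMx (F : numClosedFieldType) (n : nat) : 'M[F]_#|Idx n| :=
  \matrix_(i, j) kast F (bpt (enum_val i)) (wpt (enum_val j)).

(* K^{-1}(x, y) with x white, y black. *)
Definition Kinv (F : numClosedFieldType) (n : nat) (x y : Idx n) : F :=
  invmx (KastMx F n) (enum_rank x) (enum_rank y).

(* f_n(t) = (1 - t^n)/(1 - t), read as the polynomial 1 + t + ... + t^(n-1). *)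
Definition fpoly (F : numClosedFieldType) (n : nat) (t : F) : F :=
  \sum_(i < n) t ^+ i.

Definition Cfun (F : numClosedFieldType) (r1 r2 : F) : F :=
  1 + r1 ^+ 2 * r2 ^+ 2 + 'i * (r1 ^+ 2 + r2 ^+ 2).

Definition Gn (F : numClosedFieldType) (n : nat) (w1 w2 b1 b2 : F) : F :=
  \sum_(x : Idx n) \sum_(y : Idx n)
    Kinv F x y * w1 ^+ (wpt x).1 * w2 ^+ (wpt x).2
               * b1 ^+ (bpt y).1 * b2 ^+ (bpt y).2.

(* H^{k,l}_n: x = (x1, 2nk) white, y = (2nl, y2) black, x1, y2 odd. *)
Definition Hn (F : numClosedFieldType) (n : nat) (k l : bool) (w1 w2 b1 b2 : F) : F :=
  \sum_(a : 'I_n) \sum_(a' : 'I_n)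
    Kinv F (a, if k then ord_max else ord0) (a', if l then ord_max else ord0)
      * w1 ^+ (2 * a + 1) * w2 ^+ (2 * n * k) * b1 ^+ (2 * n * l)
      * b2 ^+ (2 * a' + 1).

From HB Require Import structures.
From mathcomp Require Import all_boot all_order all_algebra.
From mathcomp Require Import zify ring.
Set Implicit Arguments.
Unset Strict Implicit.
Unset Printing Implicit Defensive.
Import Order.TTheory GRing.Theory Num.Theory.
Local Open Scope ring_scope.

(* Write W, B for the vectors of monomials w^x (x white) and b^y (y black), so
   that G = W K^-1 B.  Applying K to the monomial vector V of the black vertices
   reproduces W up to the factor C(w1, w2), except on the white vertices with
   x2 = 0 or x2 = 2n, which lack two neighbours:
     C(w) W = w1 w2 V K + P,   and symmetrically   C(b) B = b1 b2 K U + Q,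
   with P, Q supported on the boundary.  Hence
     C(w) C(b) G = w1 w2 C(b) V B + b1 b2 P U + P K^-1 Q,
   where V B and P U are geometric sums and P K^-1 Q is a combination of the
   four H^{k,l}.  That K is invertible is shown by solving u K = 0 row by row. *)

Section Sums.
Variable R : pzRingType.

Definition indic (b : bool) (z : R) : R := if b then z else 0.

Lemma indicT z : indic true z = z.
Proof. by []. Qed.

Lemma mulr_indic x b z : x * indic b z = indic b (x * z).
Proof. by case: b; rewrite /indic ?mulr0. Qed.

Lemma indicM b z x : indic b z * x = indic b (z * x).
Proof. by case: b; rewrite /indic ?mul0r. Qed.

Lemma sum_indic (I : finType) b (f : I -> R) :
  \sum_i indic b (f i) = indic b (\sum_i f i).
Proof. by case: b; rewrite /indic // big1. Qed.

Lemma sum_indic_eq N k (h : nat -> R) :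
  \sum_(i < N) indic (i == k :> nat) (h i) = indic (k < N)%N (h k).
Proof. by rewrite -big_mkcond big_ord1_eq. Qed.

Lemma sum_indic_succ N k (h : nat -> R) :
  \sum_(i < N) indic (i.+1 == k)%N (h i) = indic (0 < k <= N)%N (h k.-1).
Proof.
case: k => [|k]; first by rewrite big1.
by under eq_bigr do rewrite eqSS; rewrite sum_indic_eq.
Qed.

Lemma sum_Idx n (f : Idx n -> R) :
  \sum_y f y = \sum_(p < n) \sum_(q < n.+1) f (p, q).
Proof. by rewrite pair_bigA; apply: eq_bigr => -[]. Qed.

End Sums.

Section KasteleynEntries.
Variable F : numClosedFieldType.

Lemma kastE (p q a c : nat) :
  kast F ((2 * q)%N, (2 * p + 1)%N) ((2 * a + 1)%N, (2 * c)%N) =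
  indic (q == a.+1)%N (indic (p == c)%N 1 + indic (p.+1 == c)%N 'i)
  + indic (q == a)%N (indic (p.+1 == c)%N 1 + indic (p == c)%N 'i).
Proof.
rewrite /kast /=.
have -> : (((2 * q)%N%:Z - (2 * a + 1)%N%:Z)%R == 1) = (q == a.+1)%N.
  by apply/eqP/eqP; lia.
have -> : (((2 * q)%N%:Z - (2 * a + 1)%N%:Z)%R == -1) = (q == a)%N.
  by apply/eqP/eqP; lia.
have -> : (((2 * p + 1)%N%:Z - (2 * c)%N%:Z)%R == 1) = (p == c)%N.
  by apply/eqP/eqP; lia.
have -> : (((2 * p + 1)%N%:Z - (2 * c)%N%:Z)%R == -1) = (p.+1 == c)%N.
  by apply/eqP/eqP; lia.
rewrite /indic; do ![case: eqP => ? /=]; try lia; ring.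
Qed.

Lemma sum_mul_kast n (g : nat -> nat -> F) (x : Idx n) :
  \sum_(y : Idx n) g y.1 y.2 * kast F (bpt y) (wpt x) =
  indic (x.2 < n)%N (g x.2 x.1.+1 + 'i * g x.2 x.1)
  + indic (0 < x.2)%N (g x.2.-1 x.1 + 'i * g x.2.-1 x.1.+1).
Proof.
case: x => a c /=; have ha := ltn_ord a.
have hc : (c <= n)%N by rewrite -ltnS.
rewrite sum_Idx.
under eq_bigr => p _ do under eq_bigr => q _ do
  rewrite /bpt /wpt /= kastE mulrDr !mulr_indic.
under eq_bigr => p _ do rewrite big_split /=
  (sum_indic_eq _ _ (fun q => g p q * _)) (sum_indic_eq _ _ (fun q => g p q * _))
  !ltnS ha (ltnW ha) !indicT !mulrDr !mulr_indic.
rewrite !big_split /= (sum_indic_eq _ _ (fun p => g p _ * _))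
  (sum_indic_eq _ _ (fun p => g p _ * _)) !(sum_indic_succ _ _ (fun p => g p _ * _)).
rewrite hc andbT /indic.
by case: (c < n)%N; case: (0 < c)%N => /=; ring.
Qed.

Lemma sum_kast_mul n (h : nat -> nat -> F) (y : Idx n) :
  \sum_(x : Idx n) kast F (bpt y) (wpt x) * h x.1 x.2 =
  indic (0 < y.2)%N (h y.2.-1 y.1 + 'i * h y.2.-1 y.1.+1)
  + indic (y.2 < n)%N (h y.2 y.1.+1 + 'i * h y.2 y.1).
Proof.
case: y => p q /=; have hp := ltn_ord p.
have hq : (q <= n)%N by rewrite -ltnS.
rewrite sum_Idx exchange_big /=.
under eq_bigr => c _ do under eq_bigr => a _ do
  rewrite /bpt /wpt /= kastE (eq_sym (q : nat)) (eq_sym (q : nat))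
    (eq_sym (p : nat)) (eq_sym p.+1) mulrDl !indicM.
under eq_bigr => c _ do rewrite big_split /=
  (sum_indic_succ _ _ (fun a => _ * h a c)) (sum_indic_eq _ _ (fun a => _ * h a c))
  hq andbT !mulrDl !indicM.
rewrite big_split /= !sum_indic !big_split /=.
rewrite !(sum_indic_eq _ _ (fun c => _ * h _ c)) !ltnS hp (ltnW hp) !indicT /indic.
by case: (q < n)%N; case: (0 < q)%N => /=; ring.
Qed.

End KasteleynEntries.

(* A vector u with u K = 0 splits into rows u_c (c < N), each a function of
   the remaining index on [0, N].  With S the shift, row c satisfies
   (S + i) u_c = -(1 + i S) u_(c-1), together with (S + i) u_0 = 0 and
   (1 + i S) u_(N-1) = 0.  The operators commute, so (S + i)^(p+1) u_p = 0,
   while (1 + i S) g = 0 makes g geometric of ratio i, on which S + i acts as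
   multiplication by 2i.  Both conditions together force a row to vanish, and
   the rows are cleared from the last one down. *)
Section ShiftOperator.
Variable F : numClosedFieldType.
Implicit Types (f g : nat -> F) (x y z : F).

Definition dshift f (a : nat) : F := f a.+1 + 'i * f a.

Local Notation D k := (iter k dshift).

Lemma iter_dshift_local k f g a :
  (forall b, (a <= b <= a + k)%N -> f b = g b) -> D k f a = D k g a.
Proof.
elim: k a => [|k IH] a fg; first by apply: fg; rewrite addn0 leqnn.
rewrite !iterS /dshift !IH // => b /andP[? ?]; apply: fg; lia.
Qed.

Lemma iter_dshift_lin k f x y a :
  D k (fun b => x * f b + y * f b.+1) a = x * D k f a + y * D k f a.+1.
Proof. by elim: k a => [|k IH] a //; rewrite !iterS /dshift !IH; ring. Qed.

Lemma iter_dshift_geom k z a :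
  D k (fun b => z * 'i ^+ b) a = (2 * 'i) ^+ k * z * 'i ^+ a.
Proof.
by elim: k a => [|k IH] a; rewrite ?expr0 ?mul1r // iterS /dshift !IH !exprS; ring.
Qed.

Lemma rec_geom N g :
  (forall a, (a < N)%N -> g a + 'i * g a.+1 = 0) ->
  forall b, (b <= N)%N -> g b = g 0%N * 'i ^+ b.
Proof.
move=> g_rec; elim=> [|b IH] hb; first by rewrite mulr1.
have -> : g b.+1 = 'i * g b - 'i * (g b + 'i * g b.+1).
  by rewrite mulrDr mulrA mulCii; ring.
by rewrite g_rec // IH 1?ltnW // exprS; ring.
Qed.

Lemma rec_eq0 N k g :
  (forall a, (a < N)%N -> g a + 'i * g a.+1 = 0) ->
  D k g 0 = 0 -> (k <= N)%N -> forall b, (b <= N)%N -> g b = 0.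
Proof.
move=> g_rec Dg0 kN; have g_geom := rec_geom g_rec.
rewrite (@iter_dshift_local _ _ (fun b => g 0%N * 'i ^+ b)) in Dg0; last first.
  by move=> b /andP[_ hb]; apply: g_geom; apply: leq_trans kN.
move: Dg0; rewrite iter_dshift_geom expr0 mulr1 => /eqP.
rewrite mulf_eq0 expf_eq0 mulf_eq0 pnatr_eq0 (negbTE (neq0Ci F)) andbF /= => /eqP g0.
by move=> b /g_geom ->; rewrite g0 mul0r.
Qed.

Section RowRecursion.
Variables (N : nat) (u : nat -> nat -> F).
Hypothesis N_gt0 : (0 < N)%N.
Hypothesis row0 : forall a, (a < N)%N -> dshift (u 0%N) a = 0.
Hypothesis rowS : forall c a, (0 < c < N)%N -> (a < N)%N ->
  dshift (u c) a = - (u c.-1 a + 'i * u c.-1 a.+1).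
Hypothesis rowN : forall a, (a < N)%N -> u N.-1 a + 'i * u N.-1 a.+1 = 0.

Lemma iter_dshift_row p :
  (p < N)%N -> forall a, (a + p.+1 <= N)%N -> D p.+1 (u p) a = 0.
Proof.
elim: p => [|p IH] hp a ha; first by apply: row0; lia.
rewrite iterSr (@iter_dshift_local _ _ (fun b => (-1) * u p b + (- 'i) * u p b.+1)).
  by rewrite iter_dshift_lin !IH ?mulr0 ?addr0 //; lia.
by move=> b /andP[_ hb]; rewrite rowS /=; [ring | lia | lia].
Qed.

Lemma row_eq0 p : (p < N)%N ->
  (forall a, (a < N)%N -> u p a + 'i * u p a.+1 = 0) ->
  forall q, (q <= N)%N -> u p q = 0.
Proof. by move=> hp p_rec; apply: (rec_eq0 p_rec (iter_dshift_row hp _)); lia. Qed.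

Lemma rows_eq0 p q : (p < N)%N -> (q <= N)%N -> u p q = 0.
Proof.
suff top_rows j : (j < N)%N -> forall q, (q <= N)%N -> u (N.-1 - j)%N q = 0.
  by move=> hp hq; rewrite (_ : p = N.-1 - (N.-1 - p))%N; [apply: top_rows | ]; lia.
elim: j => [|j IH] hj; first by rewrite subn0; apply: row_eq0 => //; lia.
rewrite (_ : N.-1 - j.+1 = (N.-1 - j).-1)%N; last lia.
apply: row_eq0 => [|a ha]; first lia.
apply/eqP; rewrite -oppr_eq0 -rowS //; last lia.
by rewrite /dshift !IH ?mulr0 ?addr0 //; lia.
Qed.

End RowRecursion.

Lemma kast_kernel_eq0 N (u : nat -> nat -> F) : (0 < N)%N ->
  (forall a c, (a < N)%N -> (c <= N)%N ->
     indic (c < N)%N (u c a.+1 + 'i * u c a)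
     + indic (0 < c)%N (u c.-1 a + 'i * u c.-1 a.+1) = 0) ->
  forall p q, (p < N)%N -> (q <= N)%N -> u p q = 0.
Proof.
move=> N_gt0 uK; apply: rows_eq0 => // [a ha | c a /andP[c_gt0 cN] ha | a ha].
- by rewrite -[RHS](uK a 0%N) // /indic N_gt0 addr0.
- apply/eqP; rewrite -addr_eq0.
  by rewrite -(uK a c) ?(ltnW cN) // /indic c_gt0 cN.
- by rewrite -[RHS](uK a N) // /indic ltnn N_gt0 add0r.
Qed.

End ShiftOperator.

Lemma mulmx_invmx_transfer (R : comUnitRingType) N (K : 'M[R]_N)
    (W V P : 'rV[R]_N) (B U Q : 'cV[R]_N) (cw cb sw sb : R) :
  K \in unitmx ->
  cw *: W = sw *: (V *m K) + P -> cb *: B = sb *: (K *m U) + Q ->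
  (cw * cb) *: (W *m invmx K *m B)
    = (sw * cb) *: (V *m B) + sb *: (P *m U) + P *m invmx K *m Q.
Proof.
move=> Kunit hW hB.
have -> : (cw * cb) *: (W *m invmx K *m B) = (cw *: W) *m invmx K *m (cb *: B).
  by rewrite -scalemxAr -!scalemxAl scalerA mulrC.
rewrite hW !mulmxDl -!scalemxAl mulmxK // -scalemxAr scalerA hB mulmxDr.
by rewrite -scalemxAr mulmxA mulmxKV // addrA.
Qed.

Section KasteleynMatrix.
Variable F : numClosedFieldType.
Variable n : nat.
Local Notation N := #|Idx n|.

Definition rowIdx (f : Idx n -> F) : 'rV[F]_N := \row_k f (enum_val k).
Definition colIdx (f : Idx n -> F) : 'cV[F]_N := \col_k f (enum_val k).

Lemma sum_enum_rank (f : 'I_N -> F) : \sum_k f k = \sum_(x : Idx n) f (enum_rank x).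
Proof.
rewrite (reindex enum_rank) //.
by exists enum_val => x _; [exact: enum_rankK | exact: enum_valK].
Qed.

Lemma KastMxE y x : KastMx F n (enum_rank y) (enum_rank x) = kast F (bpt y) (wpt x).
Proof. by rewrite mxE !enum_rankK. Qed.

Lemma rowIdx_mulmx_KastMx f :
  rowIdx f *m KastMx F n = rowIdx (fun x => \sum_y f y * kast F (bpt y) (wpt x)).
Proof.
apply/rowP => k; rewrite !mxE sum_enum_rank -{1}(enum_valK k).
by apply: eq_bigr => y _; rewrite mxE enum_rankK KastMxE.
Qed.

Lemma KastMx_mulmx_colIdx g :
  KastMx F n *m colIdx g = colIdx (fun y => \sum_x kast F (bpt y) (wpt x) * g x).
Proof.
apply/colP => k; rewrite !mxE sum_enum_rank -{1}(enum_valK k).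
by apply: eq_bigr => x _; rewrite KastMxE mxE enum_rankK.
Qed.

Lemma rowIdx_mulmx_colIdx f g : (rowIdx f *m colIdx g) 0 0 = \sum_x f x * g x.
Proof. by rewrite mxE sum_enum_rank; apply: eq_bigr => x _; rewrite !mxE enum_rankK. Qed.

Lemma rowIdx_mulmx_invmx_colIdx f g :
  (rowIdx f *m invmx (KastMx F n) *m colIdx g) 0 0
    = \sum_x \sum_y f x * Kinv F x y * g y.
Proof.
rewrite mxE sum_enum_rank exchange_big /=; apply: eq_bigr => y _.
rewrite !mxE enum_rankK mulr_suml sum_enum_rank; apply: eq_bigr => x _.
by rewrite !mxE enum_rankK.
Qed.

End KasteleynMatrix.

Lemma KastMx_unit (F : numClosedFieldType) n : (0 < n)%N -> KastMx F n \in unitmx.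
Proof.
case: n => [//|m] n_gt0; set n := m.+1.
rewrite -row_free_unit; apply: inj_row_free => v vK0.
pose u p q : F := v 0 (enum_rank ((inord p, inord q) : Idx n)).
have uE (y : Idx n) : v 0 (enum_rank y) = u y.1 y.2.
  by case: y => p q; rewrite /u !inord_val.
have uK a c : (a < n)%N -> (c <= n)%N ->
    indic (c < n)%N (u c a.+1 + 'i * u c a)
    + indic (0 < c)%N (u c.-1 a + 'i * u c.-1 a.+1) = 0.
  move=> ha hc; pose x : Idx n := (Ordinal ha, Ordinal (hc : (c < n.+1)%N)).
  have := congr1 (fun w : 'rV_#|Idx n| => w 0 (enum_rank x)) vK0.
  rewrite !mxE sum_enum_rank => <-; rewrite -(sum_mul_kast u x).
  by apply: eq_bigr => y _; rewrite KastMxE uE.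
apply/rowP => k; rewrite mxE -(enum_valK k) uE.
by case: (enum_val k) => p q; exact: (kast_kernel_eq0 n_gt0 uK (ltn_ord p) (ltn_ord q)).
Qed.

Section Monomials.
Variable R : comNzRingType.
Implicit Types (z lo hi lw hw lb hb : R).

Definition mono (z1 z2 : R) (v : nat * nat) : R := z1 ^+ v.1 * z2 ^+ v.2.

Definition edge n (c : nat) lo hi : R := indic (c == 0)%N lo + indic (c == n) hi.

Lemma monoM (z1 z2 t1 t2 : R) v : mono z1 z2 v * mono t1 t2 v = mono (z1 * t1) (z2 * t2) v.
Proof. by rewrite /mono !exprMn; ring. Qed.

Lemma expr_odd z m : z ^+ (2 * m + 1) = z * (z ^+ 2) ^+ m.
Proof. by rewrite exprD exprM expr1 mulrC. Qed.

Lemma sum_edge n lo hi (h : 'I_n.+1 -> R) :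
  \sum_(c < n.+1) edge n c lo hi * h c = lo * h ord0 + hi * h ord_max.
Proof.
rewrite /edge; under eq_bigr do rewrite mulrDl !indicM.
rewrite big_split /= big_ord_recl big_ord_recr /= !big1 ?add0r ?addr0 ?eqxx //.
by move=> c _; rewrite /indic ltn_eqF.
Qed.

Lemma sum_edge2 n lw hw lb hb (h : 'I_n.+1 -> 'I_n.+1 -> R) :
  \sum_(c < n.+1) \sum_(q < n.+1) edge n c lw hw * edge n q lb hb * h c q
  = lw * lb * h ord0 ord0 + lw * hb * h ord0 ord_max
    + hw * lb * h ord_max ord0 + hw * hb * h ord_max ord_max.
Proof.
rewrite (eq_bigr (fun c : 'I_n.+1 => edge n c lw hw * \sum_(q < n.+1) edge n q lb hb * h c q)).
  rewrite (sum_edge _ _ (fun c : 'I_n.+1 => \sum_(q < n.+1) edge n q lb hb * h c q)).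
  by rewrite !sum_edge; ring.
by move=> c _; rewrite mulr_sumr; apply: eq_bigr => q _; rewrite mulrA.
Qed.

End Monomials.

Section GeneratingFunctions.
Variable F : numClosedFieldType.
Implicit Types (lo hi lw hw lb hb : F).

(* The four neighbours of a white vertex contribute C(w1, w2) w^x / (w1 w2); the
   edge term makes up for the two neighbours outside the diamond when x2 is 0 or 2n. *)
Lemma Cfun_mono_wpt n (w1 w2 : F) (x : Idx n) : (0 < n)%N ->
  Cfun w1 w2 * mono w1 w2 (wpt x)
  = w1 * w2 * \sum_(y : Idx n) mono w1 w2 (bpt y) * kast F (bpt y) (wpt x)
    + edge n x.2 (1 + 'i * w1 ^+ 2) (('i + w1 ^+ 2) * w2 ^+ 2) * mono w1 w2 (wpt x).
Proof.
move=> n_gt0; rewrite (sum_mul_kast (fun p q => mono w1 w2 ((2 * q)%N, (2 * p + 1)%N))).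
case: x => [[a ha] [c hc]] /=; rewrite /edge /indic /mono /Cfun /= !expr_odd !exprM.
case: c hc => [|c] hc.
  by rewrite n_gt0 (_ : (0 == n)%N = false) /= ?exprS; [ring | lia].
rewrite /= !exprS; case: (ltnP c.+1 n) => cn.
  by rewrite (_ : (c.+1 == n) = false); [ring | lia].
by rewrite (_ : (c.+1 == n) = true); [ring | lia].
Qed.

Lemma Cfun_mono_bpt n (b1 b2 : F) (y : Idx n) : (0 < n)%N ->
  Cfun b1 b2 * mono b1 b2 (bpt y)
  = b1 * b2 * \sum_(x : Idx n) kast F (bpt y) (wpt x) * mono b1 b2 (wpt x)
    + edge n y.2 (1 + 'i * b2 ^+ 2) (b1 ^+ 2 * ('i + b2 ^+ 2)) * mono b1 b2 (bpt y).
Proof.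
move=> n_gt0; rewrite (sum_kast_mul (fun a c => mono b1 b2 ((2 * a + 1)%N, (2 * c)%N))).
case: y => [[p hp] [q hq]] /=; rewrite /edge /indic /mono /Cfun /= !expr_odd !exprM.
case: q hq => [|q] hq.
  by rewrite n_gt0 (_ : (0 == n)%N = false) /= ?exprS; [ring | lia].
rewrite /= !exprS; case: (ltnP q.+1 n) => qn.
  by rewrite (_ : (q.+1 == n) = false); [ring | lia].
by rewrite (_ : (q.+1 == n) = true); [ring | lia].
Qed.

Lemma sum_mono_bpt n (z1 z2 : F) :
  \sum_(y : Idx n) mono z1 z2 (bpt y) = z2 * fpoly n.+1 (z1 ^+ 2) * fpoly n (z2 ^+ 2).
Proof.
rewrite sum_Idx [RHS]mulrC /fpoly mulr_suml; apply: eq_bigr => p _.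
rewrite !mulr_sumr; apply: eq_bigr => q _.
by rewrite /mono /= expr_odd !exprM; ring.
Qed.

Lemma sum_edge_mono_wpt n lo hi (z1 z2 : F) :
  \sum_(x : Idx n) edge n x.2 lo hi * mono z1 z2 (wpt x)
    = (lo + hi * z2 ^+ (2 * n)) * z1 * fpoly n (z1 ^+ 2).
Proof.
rewrite sum_Idx /fpoly mulr_sumr; apply: eq_bigr => a _.
rewrite (sum_edge _ _ (fun c => mono z1 z2 (wpt (a, c)))) /mono /= expr_odd !exprM.
by rewrite expr0; ring.
Qed.

Definition side n (k : bool) : 'I_n.+1 := if k then ord_max else ord0.

Lemma Hn_mono n k l (w1 w2 b1 b2 : F) :
  Hn n k l w1 w2 b1 b2 = \sum_(a < n) \sum_(p < n)
    mono w1 w2 (wpt (a, side n k)) * Kinv F (a, side n k) (p, side n l)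
    * mono b1 b2 (bpt (p, side n l)).
Proof.
rewrite /Hn; apply: eq_bigr => a _; apply: eq_bigr => p _.
by case: k; case: l; rewrite /mono /= ?muln1 ?muln0; ring.
Qed.

Lemma sum_edge_Kinv_edge n lw hw lb hb (w1 w2 b1 b2 : F) :
  \sum_(x : Idx n) \sum_(y : Idx n) edge n x.2 lw hw * mono w1 w2 (wpt x)
     * Kinv F x y * (edge n y.2 lb hb * mono b1 b2 (bpt y))
  = lw * lb * Hn n false false w1 w2 b1 b2 + lw * hb * Hn n false true w1 w2 b1 b2
    + hw * lb * Hn n true false w1 w2 b1 b2 + hw * hb * Hn n true true w1 w2 b1 b2.
Proof.
pose T (a : 'I_n) c p q :=
  mono w1 w2 (wpt (a, c)) * Kinv F (a, c) (p, q) * mono b1 b2 (bpt (p, q)).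
transitivity (\sum_(a < n) \sum_(p < n) \sum_(c < n.+1) \sum_(q < n.+1)
                edge n c lw hw * edge n q lb hb * T a c p q).
  rewrite sum_Idx; apply: eq_bigr => a _; under eq_bigr => c _ do rewrite sum_Idx.
  rewrite exchange_big; apply: eq_bigr => p _; apply: eq_bigr => c _.
  by apply: eq_bigr => q _; rewrite /T; ring.
rewrite !Hn_mono !mulr_sumr -!big_split; apply: eq_bigr => a _.
rewrite !mulr_sumr -!big_split; apply: eq_bigr => p _.
by rewrite (sum_edge2 _ _ _ _ (T a ^~ p)).
Qed.

Lemma GnE n (w1 w2 b1 b2 : F) : Gn n w1 w2 b1 b2
  = \sum_(x : Idx n) \sum_(y : Idx n) mono w1 w2 (wpt x) * Kinv F x y * mono b1 b2 (bpt y).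
Proof. by apply: eq_bigr => x _; apply: eq_bigr => y _; rewrite /mono; ring. Qed.

End GeneratingFunctions.

Section Expansion.
Variable F : numClosedFieldType.
Variable n : nat.
Hypothesis n_gt0 : (0 < n)%N.
Variables w1 w2 b1 b2 : F.

Local Notation lw := (1 + 'i * w1 ^+ 2).
Local Notation hw := (('i + w1 ^+ 2) * w2 ^+ 2).
Local Notation lb := (1 + 'i * b2 ^+ 2).
Local Notation hb := (b1 ^+ 2 * ('i + b2 ^+ 2)).

Lemma Gn_expansion :
  Cfun w1 w2 * Cfun b1 b2 * Gn n w1 w2 b1 b2
  = w1 * w2 * Cfun b1 b2 * (w2 * b2 * fpoly n.+1 ((w1 * b1) ^+ 2) * fpoly n ((w2 * b2) ^+ 2))
    + b1 * b2 * ((lw + hw * (w2 * b2) ^+ (2 * n)) * (w1 * b1) * fpoly n ((w1 * b1) ^+ 2))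
    + (lw * lb * Hn n false false w1 w2 b1 b2 + lw * hb * Hn n false true w1 w2 b1 b2
       + hw * lb * Hn n true false w1 w2 b1 b2 + hw * hb * Hn n true true w1 w2 b1 b2).
Proof.
have hW : Cfun w1 w2 *: rowIdx (fun x => mono w1 w2 (wpt x))
    = (w1 * w2) *: (rowIdx (fun y => mono w1 w2 (bpt y)) *m KastMx F n)
      + rowIdx (fun x => edge n x.2 lw hw * mono w1 w2 (wpt x)).
  by rewrite rowIdx_mulmx_KastMx; apply/rowP => k; rewrite !mxE Cfun_mono_wpt.
have hB : Cfun b1 b2 *: colIdx (fun y => mono b1 b2 (bpt y))
    = (b1 * b2) *: (KastMx F n *m colIdx (fun x => mono b1 b2 (wpt x)))
      + colIdx (fun y => edge n y.2 lb hb * mono b1 b2 (bpt y)).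
  by rewrite KastMx_mulmx_colIdx; apply/colP => k; rewrite !mxE Cfun_mono_bpt.
have entryD (A B : 'M[F]_1) : (A + B) 0 0 = A 0 0 + B 0 0 by rewrite mxE.
have entryZ c (A : 'M[F]_1) : (c *: A) 0 0 = c * A 0 0 by rewrite mxE.
have := congr1 (fun M : 'M_1 => M 0 0) (mulmx_invmx_transfer (KastMx_unit F n_gt0) hW hB).
rewrite /= !entryD !entryZ !rowIdx_mulmx_invmx_colIdx !rowIdx_mulmx_colIdx GnE => ->.
rewrite sum_edge_Kinv_edge; congr (_ + _ + _).
  by rewrite -sum_mono_bpt; congr (_ * _); apply: eq_bigr => y _; rewrite monoM.
rewrite -sum_edge_mono_wpt; congr (_ * _); apply: eq_bigr => x _.
by rewrite -mulrA monoM.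
Qed.

End Expansion.

Theorem lemma3p3 (F : numClosedFieldType) (n : nat) (w1 w2 b1 b2 : F) :
  (1 <= n)%N ->
  Cfun w1 w2 != 0 -> Cfun b1 b2 != 0 ->
  KastMx F n \in unitmx /\
  Gn n w1 w2 b1 b2 =
    w1 * w2 ^+ 2 * b2 * fpoly n.+1 (w1 ^+ 2 * b1 ^+ 2) * fpoly n (w2 ^+ 2 * b2 ^+ 2)
      / Cfun w1 w2
    + (1 + 'i * w1 ^+ 2) *
      (((1 + 'i * b2 ^+ 2) * Hn n false false w1 w2 b1 b2
        + b1 ^+ 2 * (b2 * w1 * fpoly n (b1 ^+ 2 * w1 ^+ 2)
                     + ('i + b2 ^+ 2) * Hn n false true w1 w2 b1 b2))
       / (Cfun w1 w2 * Cfun b1 b2))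
    + ('i + w1 ^+ 2) * w2 ^+ 2 *
      ((b1 ^+ 2 * b2 ^+ (2 * n + 1) * w1 * w2 ^+ (2 * n) * fpoly n (b1 ^+ 2 * w1 ^+ 2)
        + (1 + 'i * b2 ^+ 2) * Hn n true false w1 w2 b1 b2
        + b1 ^+ 2 * ('i + b2 ^+ 2) * Hn n true true w1 w2 b1 b2)
       / (Cfun w1 w2 * Cfun b1 b2)).
Proof.
move=> n_gt0 Cw_neq0 Cb_neq0; split; first exact: KastMx_unit.
apply: (mulfI (mulf_neq0 Cw_neq0 Cb_neq0)); rewrite Gn_expansion //.
rewrite !exprMn [b1 ^+ 2 * w1 ^+ 2]mulrC expr_odd !exprM.
by field; rewrite Cw_neq0 Cb_neq0.
Qed.
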